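(* If $Z\subseteq A^+$ is a regular language which is a strong alt-induced code, then there are only finitely many strong alternative codes $(X,Y)$ with $XY=Z$.
   Context: $A$ is a finite alphabet, $A^*$ the set of words, $A^+$ the non-empty words, $XY=\{xy:x\in X,y\in Y\}$. For $X,Z\subseteq A^*$: $X^{-1}Z=\{u\in A^*: xu\in Z \text{ for some } x\in X\}$, $ZY^{-1}=\{u\in A^*: uy\in Z\text{ for some } y\in Y\}$. A code is a subset of $A^+$ in which every word has at most one factorization into its elements. For non-empty $X,Y\subseteq A^+$, $(X,Y)$ is an alternative code if $XY$ is a code and each element of $XY$ has exactly one factorization $xy$ with $x\in X,y\in Y$ (equivalently, no word admits two different similar alternative factorizations on $(X,Y)$). It is a strong alternative code if moreover $X^{-1}(XY)\subseteq Y$ and $(XY)Y^{-1}\subseteq X$. $Z$ is a strong alt-induced code if $Z=XY$ for some strong alternative code $(X,Y)$. *)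

From mathcomp Require Import all_boot.
Set Implicit Arguments. Unset Strict Implicit. Unset Printing Implicit Defensive.

Definition lang (A : finType) := seq A -> Prop.

Definition lcat (A : finType) (X Y : lang A) : lang A :=
  fun w => exists x y, X x /\ Y y /\ w = x ++ y.

Definition nonempty_words (A : finType) (X : lang A) : Prop :=
  forall w, X w -> w <> [::].

Definition is_code (A : finType) (X : lang A) : Prop :=
  nonempty_words X /\
  forall s t : seq (seq A),
    (forall w, w \in s -> X w) -> (forall w, w \in t -> X w) ->
    flatten s = flatten t -> s = t.

Definition alt_code (A : finType) (X Y : lang A) : Prop :=
  (exists x, X x) /\ (exists y, Y y) /\
  nonempty_words X /\ nonempty_words Y /\
  is_code (lcat X Y) /\
  (forall x1 y1 x2 y2, X x1 -> Y y1 -> X x2 -> Y y2 ->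
     x1 ++ y1 = x2 ++ y2 -> x1 = x2 /\ y1 = y2).

(* Strong alternative code: additionally X^{-1}(XY) ⊆ Y and (XY)Y^{-1} ⊆ X. *)
Definition strong_alt_code (A : finType) (X Y : lang A) : Prop :=
  alt_code X Y /\
  (forall x u, X x -> lcat X Y (x ++ u) -> Y u) /\
  (forall u y, Y y -> lcat X Y (u ++ y) -> X u).

Definition strong_alt_induced (A : finType) (Z : lang A) : Prop :=
  exists X Y : lang A, strong_alt_code X Y /\ (forall w, lcat X Y w <-> Z w).

Definition regular (A : finType) (Z : lang A) : Prop :=
  exists (Q : finType) (q0 : Q) (delta : Q -> A -> Q) (F : pred Q),
    forall w, Z w <-> F (foldl delta q0 w).

Definition lang_eq (A : finType) (X X' : lang A) : Prop := forall w, X w <-> X' w.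

(* Propositional list membership (lang A has no eqType). *)
Fixpoint inl (T : Type) (p : T) (l : seq T) : Prop :=
  if l is q :: l' then q = p \/ inl p l' else False.

From mathcomp Require Import all_boot.
From Stdlib Require Import ClassicalEpsilon.
Set Implicit Arguments. Unset Strict Implicit. Unset Printing Implicit Defensive.

(* For a strong alternative code, [Y = X^-1 Z] and [X = Z Y^-1], so [(X, Y)] is
   determined by [X^-1 Z]. When [Z] is recognised by a finite automaton, [X^-1 Z]
   is the language accepted from the set of states reached by reading words of
   [X]; hence there are at most as many such codes as sets of states. *)

Definition left_quotient (A : finType) (X Z : lang A) : lang A :=
  fun u => exists2 x, X x & Z (x ++ u).

Definition right_quotient (A : finType) (Z Y : lang A) : lang A :=
  fun u => exists2 y, Y y & Z (u ++ y).

Definition accepted_from (A Q : finType) (delta : Q -> A -> Q) (F : pred Q)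
    (S : {set Q}) : lang A :=
  fun w => exists2 q, q \in S & F (foldl delta q w).

Section StrongAltCode.

Variables (A : finType) (X Y Z : lang A).
Hypotheses (XY_strong : strong_alt_code X Y) (XY_Z : lang_eq (lcat X Y) Z).

Lemma strong_alt_code_left_quotient : lang_eq Y (left_quotient X Z).
Proof.
have [[[x0 Xx0] _] [XZ_Y _]] := XY_strong.
move=> u; split=> [Yu | [x Xx Zxu]].
- by exists x0 => //; apply/XY_Z; exists x0, u.
- by apply: (XZ_Y x) => //; apply/XY_Z.
Qed.

Lemma strong_alt_code_right_quotient : lang_eq X (right_quotient Z Y).
Proof.
have [[_ [[y0 Yy0] _]] [_ ZY_X]] := XY_strong.
move=> u; split=> [Xu | [y Yy Zuy]].
- by exists y0 => //; apply/XY_Z; exists u, y0.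
- by apply: (ZY_X u y) => //; apply/XY_Z.
Qed.

End StrongAltCode.

Lemma right_quotient_lang_eq (A : finType) (Z Y Y' : lang A) :
  lang_eq Y Y' -> lang_eq (right_quotient Z Y) (right_quotient Z Y').
Proof. by move=> eqY u; split=> -[y /eqY Yy Zuy]; exists y. Qed.

Lemma finset_of_prop (T : finType) (P : T -> Prop) :
  exists S : {set T}, forall x, x \in S <-> P x.
Proof.
exists [set x | if excluded_middle_informative (P x) then true else false].
by move=> x; rewrite inE; case: excluded_middle_informative.
Qed.

Lemma left_quotient_dfa (A Q : finType) (q0 : Q) (delta : Q -> A -> Q)
    (F : pred Q) (X Z : lang A) :
  (forall w, Z w <-> F (foldl delta q0 w)) ->
  exists S : {set Q}, lang_eq (left_quotient X Z) (accepted_from delta F S).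
Proof.
move=> recZ.
have [S memS] := finset_of_prop (fun q => exists2 x, X x & q = foldl delta q0 x).
exists S => u; split=> [[x Xx /recZ] | [q /memS [x Xx ->] Fu]].
- by rewrite foldl_cat => Fxu; exists (foldl delta q0 x) => //; apply/memS; exists x.
- by exists x => //; apply/recZ; rewrite foldl_cat.
Qed.

Lemma inl_map (T : eqType) (U : Type) (f : T -> U) (x : T) (s : seq T) :
  x \in s -> inl (f x) (map f s).
Proof.
by elim: s => //= a s IHs; rewrite in_cons => /predU1P [->|/IHs]; [left|right].
Qed.

Theorem theoremT (A : finType) (Z : lang A) :
  nonempty_words Z -> regular Z -> strong_alt_induced Z ->
  exists l : seq (lang A * lang A),
    forall X Y : lang A, strong_alt_code X Y -> lang_eq (lcat X Y) Z ->
      exists2 p, inl p l & lang_eq X p.1 /\ lang_eq Y p.2.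
Proof.
move=> _ [Q [q0 [delta [F recZ]]]] _.
pose code_of (S : {set Q}) :=
  (right_quotient Z (accepted_from delta F S), accepted_from delta F S).
exists (map code_of (enum [set: {set Q}])) => X Y XY_strong XY_Z.
have [S eqYS] := left_quotient_dfa X recZ.
have eqY : lang_eq Y (accepted_from delta F S).
  by move=> w; rewrite (strong_alt_code_left_quotient XY_strong XY_Z w).
exists (code_of S); first by apply: inl_map; rewrite mem_enum inE.
split=> //= u.
rewrite (strong_alt_code_right_quotient XY_strong XY_Z u).
exact: right_quotient_lang_eq.
Qed.
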